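(* Let $s\ge1$ and $\varphi\in\mathcal B_s\cap\big(S_1(\zeta_2,\zeta_{22})\circ S_{s-1}(A)\big)$. Then $\varphi\in S_s(\zeta_2,\zeta_{22})$.
   Context: Forms on $\mathbf P^1\times\mathbf P^1$: $\zeta_i=dz_i/z_i$, $\zeta_{ii}=dz_i/(1-z_i)$ ($i=1,2$), $\zeta_{12}=d(z_1z_2)/(1-z_1z_2)$; $A=\{\zeta_1,\zeta_{11},\zeta_2,\zeta_{22},\zeta_{12}\}$. $S_s(A)$ is the vector space with basis the words of length $s$ in $A$, $\circ$ is concatenation. $S_1(\zeta_2,\zeta_{22})\circ S_{s-1}(A)$ is the span of words of length $s$ whose first letter is $\zeta_2$ or $\zeta_{22}$, and $S_s(\zeta_2,\zeta_{22})$ the span of words of length $s$ in the letters $\zeta_2,\zeta_{22}$ only. A homogeneous element $\sum_Ic_I\omega_{i_1}\circ\cdots\circ\omega_{i_s}\in S_s(A)$ satisfies Chen's integrability condition if for each $1\le l<s$, $\sum_Ic_I\omega_{i_1}\otimes\cdots\otimes(\omega_{i_l}\wedge\omega_{i_{l+1}})\otimes\cdots\otimes\omega_{i_s}=0$ as a multiple differential form; $\mathcal B_s$ is the space of elements of $S_s(A)$ satisfying it. *)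

From HB Require Import structures.
From mathcomp Require Import all_boot all_order all_algebra.
From mathcomp Require Import fraction.
Set Implicit Arguments. Unset Strict Implicit. Unset Printing Implicit Defensive.
Import Order.TTheory GRing.Theory Num.Theory.
Local Open Scope ring_scope.

Inductive letter := L1 | L11 | L2 | L22 | L12.
Definition letters : seq letter := [:: L1; L11; L2; L22; L12].

(* Scalars: a number field F (e.g. rat, real, algC).  Rational functions in
   z1, z2 : the field F(z1,z2) = Frac(F[z2][z1]). *)
Definition RF (F : numFieldType) := {fraction {poly {poly F}}}.
Definition emb (F : numFieldType) (p : {poly {poly F}}) : RF F :=
  @FracField.tofrac {poly {poly F}} p.
Definition z1 (F : numFieldType) : RF F := emb 'X.
Definition z2 (F : numFieldType) : RF F := emb ('X%:P).
Definition cst (F : numFieldType) (c : F) : RF F := emb ((c%:P)%:P).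

(* A rational 1-form  a dz1 + b dz2  is the pair (a, b). *)
Definition form (F : numFieldType) (l : letter) : RF F * RF F :=
  match l with
  | L1  => ((z1 F)^-1, 0)
  | L11 => ((1 - z1 F)^-1, 0)
  | L2  => (0, (z2 F)^-1)
  | L22 => (0, (1 - z2 F)^-1)
  | L12 => (z2 F / (1 - z1 F * z2 F), z1 F / (1 - z1 F * z2 F))
  end.

(* Wedge of two 1-forms: coefficient of dz1 /\ dz2. *)
Definition wedge (F : numFieldType) (w w' : RF F * RF F) : RF F :=
  w.1 * w'.2 - w.2 * w'.1.

(* An element of the free vector space on words is its coefficient function
   phi : seq letter -> F.  It lies in S_s(A) iff it is supported on words of
   length s (finite support is then automatic). *)
Definition in_S (F : numFieldType) (s : nat) (phi : seq letter -> F) : Prop :=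
  forall w, phi w <> 0 -> size w = s.

(* Chen's integrability condition for a homogeneous element of length s:
   for each 1 <= l < s (prefix u of length l-1, suffix v of length s-l-1),
   the multiple form  sum_I c_I w_{i1} (x) .. (x) (w_{il} /\ w_{il+1}) (x) .. 
   vanishes.  Since the 1-forms of A are linearly independent over F, this is
   equivalent to the vanishing, for every prefix u and suffix v, of the
   2-form  sum_{a,b} c_{u a b v} (w_a /\ w_b). *)
Definition chen (F : numFieldType) (s : nat) (phi : seq letter -> F) : Prop :=
  forall u v : seq letter, (size u + size v + 2)%N = s ->
    \sum_(a <- letters) \sum_(b <- letters)
       cst (phi (u ++ a :: b :: v)) * wedge (form F a) (form F b) = 0.

Definition in_B (F : numFieldType) (s : nat) (phi : seq letter -> F) : Prop :=
  in_S s phi /\ chen s phi.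

Definition is_two (a : letter) : bool :=
  match a with L2 | L22 => true | _ => false end.

Definition in_S1_two_first (F : numFieldType) (s : nat) (phi : seq letter -> F) : Prop :=
  in_S s phi /\ (forall a w, ~~ is_two a -> phi (a :: w) = 0).

Definition in_S_two (F : numFieldType) (s : nat) (phi : seq letter -> F) : Prop :=
  in_S s phi /\ (forall w, phi w <> 0 -> all is_two w).

From Pilot Require Import Defs.
From mathcomp Require Import all_boot all_order all_algebra fraction.
From mathcomp Require Import ring.
Set Implicit Arguments. Unset Strict Implicit. Unset Printing Implicit Defensive.
Import GRing.Theory Num.Theory.
Local Open Scope ring_scope.

(* For a prefix u and suffix v, the coefficients c a b := phi (u ++ a :: b :: v)
   vanish unless a is zeta_2 or zeta_22, by induction on the length of u.
   Then in Chen's 2-form only dz2 /\ dz1 survives, with coefficient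
   - sum_(a in {2,22}, b in {1,11,12}) c a b g_a f_b, where g_a is the dz2-part
   of zeta_a and f_b the dz1-part of zeta_b.  The six products
   1/(z2 z1), 1/(z2 (1-z1)), 1/(1-z1 z2), 1/((1-z2) z1), 1/((1-z2)(1-z1)),
   z2/((1-z2)(1-z1 z2)) are linearly independent, so these c a b vanish too:
   the next letter b is again zeta_2 or zeta_22. *)

(* The dz1 /\ dz2 coefficient of Chen's 2-form when all first letters are
   zeta_2 or zeta_22, multiplied by - z1 z2 (1-z1) (1-z2) (1-z1 z2). *)
Definition chen_numerator (R : comNzRingType) (x y : R) (k : letter -> letter -> R) : R :=
  k L2 L1 * (1 - x) * (1 - y) * (1 - x * y)
  + k L2 L11 * x * (1 - y) * (1 - x * y)
  + k L2 L12 * x * y * (1 - x) * (1 - y)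
  + k L22 L1 * y * (1 - x) * (1 - x * y)
  + k L22 L11 * x * y * (1 - x * y)
  + k L22 L12 * x * y * y * (1 - x).

Lemma rmorph_chen_numerator (R S : comNzRingType) (f : {rmorphism R -> S}) x y k :
  f (chen_numerator x y k) = chen_numerator (f x) (f y) (fun a b => f (k a b)).
Proof. by rewrite /chen_numerator !rmorphD !rmorphM !rmorphB !rmorph1 !rmorphM. Qed.

(* [Defs.form F] is [form_at (z1 F) (z2 F)] up to conversion; stating the
   identity over an abstract field keeps [field] fast. *)
Definition form_at (K : fieldType) (x y : K) (l : letter) : K * K :=
  match l with
  | L1  => (x^-1, 0)
  | L11 => ((1 - x)^-1, 0)
  | L2  => (0, y^-1)
  | L22 => (0, (1 - y)^-1)
  | L12 => (y / (1 - x * y), x / (1 - x * y))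
  end.

Lemma chen_numerator_two_first (K : fieldType) (x y : K) (k : letter -> letter -> K) :
  x != 0 -> y != 0 -> 1 - x != 0 -> 1 - y != 0 -> 1 - x * y != 0 ->
  (forall a b, ~~ is_two a -> k a b = 0) ->
  chen_numerator x y k = - (x * y * (1 - x) * (1 - y) * (1 - x * y)) *
    \sum_(a <- letters) \sum_(b <- letters)
      k a b * ((form_at x y a).1 * (form_at x y b).2 - (form_at x y a).2 * (form_at x y b).1).
Proof.
move=> nx ny n1x n1y n1xy k0.
rewrite /letters !big_cons !big_nil !(k0 L1) ?(k0 L11) ?(k0 L12) // /chen_numerator /=.
by field; rewrite nx ny n1x n1y n1xy.
Qed.

Lemma chen_numerator_coef_eq0 (F : numFieldType) (c : letter -> letter -> F) :
  (forall x y : F, chen_numerator x y c = 0) ->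
  forall a b, is_two a -> ~~ is_two b -> c a b = 0.
Proof.
move=> c0.
have natr_mul_eq0 n (t : F) : (0 < n)%N -> n%:R * t = 0 -> t = 0.
  by move=> n_gt0 /eqP; rewrite mulf_eq0 pnatr_eq0 eqn0Ngt n_gt0 => /eqP.
have e21 : c L2 L1 = 0 by rewrite -[RHS](c0 0 0) /chen_numerator; ring.
have e211 : c L2 L11 = 0 by rewrite -[RHS](c0 1 0) /chen_numerator; ring.
have e221 : c L22 L1 = 0 by rewrite -[RHS](c0 0 1) /chen_numerator; ring.
have e2211 : c L22 L11 = 0.
  apply: (natr_mul_eq0 2) => //.
  apply/eqP; rewrite -oppr_eq0; apply/eqP.
  by rewrite -[RHS](c0 1 2) /chen_numerator e211; ring.
have e2212 : c L22 L12 = 0.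
  apply: (natr_mul_eq0 2) => //.
  apply/eqP; rewrite -oppr_eq0; apply/eqP.
  by rewrite -[RHS](c0 2 1) /chen_numerator e221 e2211; ring.
have e212 : c L2 L12 = 0.
  apply: (natr_mul_eq0 4) => //.
  by rewrite -[RHS](c0 2 2) /chen_numerator e21 e211 e221 e2211 e2212; ring.
by case=> [] [].
Qed.

Section RationalFunctions.
Variable F : numFieldType.
Local Notation ev a b p := (horner_eval a (map_poly (horner_eval b) p)).

Lemma ev_X (a b : F) : ev a b 'X = a.
Proof. by rewrite map_polyX horner_evalE hornerX. Qed.

Lemma ev_Y (a b : F) : ev a b ('X%:P) = b.
Proof. by rewrite map_polyC horner_evalE hornerC /= horner_evalE hornerX. Qed.

Lemma ev_C (a b c : F) : ev a b ((c%:P)%:P) = c.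
Proof. by rewrite map_polyC horner_evalE hornerC /= horner_evalE hornerC. Qed.

Lemma emb_neq0 (p : {poly {poly F}}) (a b : F) : ev a b p != 0 -> emb p != 0.
Proof. by rewrite /emb tofrac_eq0 => nz; apply: contraNneq nz => ->; rewrite !rmorph0. Qed.

Lemma cst0 : cst (0 : F) = 0.
Proof. by rewrite /cst /emb !polyC0 rmorph0. Qed.

Lemma chen_numerator_fraction_eq0 (c : letter -> letter -> F) :
  chen_numerator (z1 F) (z2 F) (fun a b => cst (c a b)) = 0 ->
  forall x y, chen_numerator x y c = 0.
Proof.
rewrite /z1 /z2 /cst /emb -rmorph_chen_numerator => /eqP; rewrite tofrac_eq0 => /eqP P0 x y.
have := congr1 (horner_eval x \o map_poly (horner_eval y)) P0.
rewrite rmorph_chen_numerator rmorph0 /= ev_X ev_Y.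
by rewrite /chen_numerator /= !ev_C.
Qed.

Lemma denominators_neq0 :
  [/\ z1 F != 0, z2 F != 0, 1 - z1 F != 0, 1 - z2 F != 0 & 1 - z1 F * z2 F != 0].
Proof.
rewrite /z1 /z2 -(rmorph1 (@FracField.tofrac _)) -!rmorphM -!rmorphB.
split; [apply: (@emb_neq0 _ 1 0)|apply: (@emb_neq0 _ 0 1)|apply: (@emb_neq0 _ 0 0)..];
  by rewrite ?rmorphB ?rmorphM ?rmorph1 /= ?ev_X ?ev_Y ?mul0r ?subr0 oner_eq0.
Qed.

Lemma chen_two_second (c : letter -> letter -> F) :
  (forall a b, ~~ is_two a -> c a b = 0) ->
  \sum_(a <- letters) \sum_(b <- letters) cst (c a b) * wedge (Defs.form F a) (Defs.form F b) = 0 ->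
  forall a b, ~~ is_two b -> c a b = 0.
Proof.
move=> c0 chen0.
have [nx ny n1x n1y n1xy] := denominators_neq0.
have cst_c0 a b : ~~ is_two a -> cst (c a b) = 0 by move/c0 ->; exact: cst0.
have := chen_numerator_two_first nx ny n1x n1y n1xy cst_c0.
rewrite [X in _ * X]chen0 mulr0 => /chen_numerator_fraction_eq0 /chen_numerator_coef_eq0 c_two.
by move=> a b nb; case ha: (is_two a); [exact: c_two | rewrite c0 ?ha].
Qed.
End RationalFunctions.

Section Support.
Variables (F : numFieldType) (s : nat) (phi : seq letter -> F).
Hypotheses (phi_S : in_S s phi) (phi_chen : chen s phi).
Hypothesis phi_two_first : forall a w, ~~ is_two a -> phi (a :: w) = 0.

Lemma is_two_of_support u a v : phi (u ++ a :: v) != 0 -> is_two a.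
Proof.
elim/last_ind: u a v => [|u a' IH] a v phi_ne0.
  by apply: contraNT phi_ne0 => /phi_two_first ->.
rewrite cat_rcons in phi_ne0.
have len : (size u + size v + 2)%N = s.
  by rewrite -(phi_S (elimN eqP phi_ne0)) size_cat /= -addnA addn2.
have two_first x y : ~~ is_two x -> phi (u ++ x :: y :: v) = 0.
  by move=> nx; apply/eqP; exact: contraNT (IH x (y :: v)) nx.
apply: contraNT phi_ne0 => na; apply/eqP.
exact: (chen_two_second two_first (phi_chen len)).
Qed.

Lemma all_two_of_support u w : phi (u ++ w) != 0 -> all is_two w.
Proof.
elim: w u => [//|a w IH] u phi_ne0 /=.
by rewrite (is_two_of_support phi_ne0) (IH (rcons u a)) // cat_rcons.
Qed.
End Support.

Theorem lemma5p8 (F : numFieldType) (s : nat) (phi : seq letter -> F) :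
  (1 <= s)%N -> in_B s phi -> in_S1_two_first s phi -> in_S_two s phi.
Proof.
move=> _ [phi_S phi_chen] [_ phi_two_first]; split=> // w /eqP phi_ne0.
exact: (all_two_of_support phi_S phi_chen phi_two_first (u := [::])).
Qed.
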